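(* Let $\Gamma=(N,A,u)$ be a finite game that admits a correlated equilibrium $p\in\Delta A$ all of whose coordinates are rational numbers. Then there exists a finite set of message profiles $M=\times_{i\in N}M_i$ such that every outcome $\mu\in\Delta A$ with $\mathrm{supp}(\mu)\subseteq\mathrm{supp}(p)$ is implemented by some partially specified data-generating process $\mathcal{D}=(M,\eta,\mathcal{F})$.
   Context: A finite game $\Gamma=(N,A,u)$ has a finite set of players $N$, finite action sets $A_i$, $A=\times_{i\in N}A_i$, and utilities $u_i:A\to\mathbb{R}$ (extended multilinearly to mixed action profiles). A correlated equilibrium is $p\in\Delta A$ such that for all $i$, all $a_i$ with $\sum_{a_{-i}}p_{a_i,a_{-i}}>0$, and all $b\in A_i$: $\sum_{a_{-i}}p_{a_i,a_{-i}}[u_i(a_i,a_{-i})-u_i(b,a_{-i})]\ge 0$. A partially specified data-generating process is a triple $\mathcal{D}=(M,\eta,\mathcal{F})$ with $M=\times_iM_i$ finite, $\eta\in\Delta M$, $\mathcal{F}\subseteq\{f:M\to\mathbb{R}\}$. Let $\Delta_{\mathcal{D}}=\{q\in\Delta M:\sum_mq_mf(m)=\sum_m\eta_mf(m)\ \forall f\in\mathcal{F}\}$; the belief is the unique maximizer $q$ of $\mathcal{H}(q)=-\sum_mq_m\log q_m$ over $\Delta_{\mathcal{D}}$. A strategy profile is $\sigma=(\sigma_i)$, $\sigma_i:M_i\to\Delta A_i$, $\sigma(a\mid m)=\prod_i\sigma_i(a_i\mid m_i)$, and $(\eta\circ\sigma)(a)=\sum_m\eta_m\sigma(a\mid m)$.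 $\mu\in\Delta A$ is implemented by $\mathcal{D}$ if there is $\sigma$ with (i) $q$ the maximum-entropy belief; (ii) for all $i$, all $m_i$ with positive $q$-marginal, all $a_i'\in A_i$: $\sum_{m_{-i}}q_{m_i,m_{-i}}[u_i(\sigma_i(m_i),\sigma_{-i}(m_{-i}))-u_i(a_i',\sigma_{-i}(m_{-i}))]\ge0$; (iii) $\mu=\eta\circ\sigma$. *)

From HB Require Import structures.
From mathcomp Require Import all_boot all_order all_algebra.
From mathcomp Require Import reals exp.
Set Implicit Arguments. Unset Strict Implicit. Unset Printing Implicit Defensive.
Import Order.TTheory GRing.Theory Num.Theory.
Local Open Scope ring_scope.

Definition profile (N : finType) (A : N -> finType) := {dffun forall i : N, A i}.
Arguments profile : clear implicits.

Section Defs.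
Variable R : realType.

Definition is_dist (X : finType) (f : X -> R) : Prop :=
  (forall x, 0 <= f x) /\ \sum_(x : X) f x = 1.

Variables (N : finType) (A : N -> finType).

Definition upd (a : profile N A) (i : N) (b : A i) : profile N A :=
  finfun (dfwith (fun j => a j) b).
Arguments upd a i b : clear implicits.

Definition correlated_eq (u : N -> profile N A -> R) (p : profile N A -> R) : Prop :=
  is_dist p /\
  forall (i : N) (ai : A i), 0 < \sum_(a : profile N A | a i == ai) p a ->
    forall b : A i,
      0 <= \sum_(a : profile N A | a i == ai) p a * (u i a - u i (upd a i b)).

Definition mixpay (u : N -> profile N A -> R) (i : N) (s : forall j, A j -> R) : R :=
  \sum_(a : profile N A) (\prod_(j : N) s j (a j)) * u i a.

Definition pure (X : finType) (b : X) : X -> R := fun x => (x == b)%:R.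

Variable M : N -> finType.

(* Shannon entropy, with the convention 0 log 0 = 0 (ln 0 = 0 in the library) *)
Definition entropy (q : profile N M -> R) : R :=
  - \sum_(m : profile N M) q m * ln (q m).

Definition DeltaD (eta : profile N M -> R) (F : (profile N M -> R) -> Prop)
  (q : profile N M -> R) : Prop :=
  is_dist q /\ forall f, F f -> \sum_m q m * f m = \sum_m eta m * f m.

Definition maxent_belief (eta : profile N M -> R) (F : (profile N M -> R) -> Prop)
  (q : profile N M -> R) : Prop :=
  DeltaD eta F q /\
  (forall q', DeltaD eta F q' -> entropy q' <= entropy q) /\
  (forall q', DeltaD eta F q' -> entropy q' = entropy q -> q' = q).

Definition is_strategy (sigma : forall j, M j -> A j -> R) : Prop :=
  forall j (mj : M j), is_dist (sigma j mj).

Definition mixed_at (sigma : forall j, M j -> A j -> R) (m : profile N M) :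
  forall j, A j -> R := fun j => sigma j (m j).

Definition implemented (u : N -> profile N A -> R) (eta : profile N M -> R)
  (F : (profile N M -> R) -> Prop) (mu : profile N A -> R) : Prop :=
  exists sigma : forall j, M j -> A j -> R,
    is_strategy sigma /\
    exists q : profile N M -> R,
      maxent_belief eta F q /\
      (forall (i : N) (mi : M i), 0 < \sum_(m : profile N M | m i == mi) q m ->
         forall b : A i,
           0 <= \sum_(m : profile N M | m i == mi)
                  q m * (mixpay u i (mixed_at sigma m)
                         - mixpay u i (dfwith (mixed_at sigma m) (pure b)))) /\
      (forall a : profile N A,
         mu a = \sum_(m : profile N M) eta m * \prod_(j : N) sigma j (m j) (a j)).

End Defs.
Arguments upd {N A} a i b.

(* Scale p to integer weights n(a) = lam p(a), which rationality allows.  A message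
   of player j is a pair (a_j, g_j) of a recommended action and a noise value in
   Z/(T+1), T >= max n.  With the single moment condition "no mass outside S", where
   S = {(a, g) : sum_j g_j < n(a)}, the maximum-entropy belief is uniform on S; the
   prior eta puts mass mu(a) on (a, 0), which lies in S because p(a) > 0.  Under the
   uniform belief on S, a player i who receives (x, k) weighs each profile a with
   a_i = x by the number of noise vectors with g_i = k and sum g < n(a).  Shifting the
   noise of another player shows that this number is proportional to n(a), hence to
   p(a), so obedience reduces to the obedience constraints of the correlated
   equilibrium p (with a single player, the recommendation x determines a). *)

From HB Require Import structures.
From mathcomp Require Import all_boot all_order all_algebra.
From mathcomp Require Import reals exp.
From mathcomp Require Import lra ring.
From mathcomp Require boolp.
Set Implicit Arguments. Unset Strict Implicit. Unset Printing Implicit Defensive.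
Import Order.TTheory GRing.Theory Num.Theory.
Local Open Scope ring_scope.

Section MaxEntropy.
Variable R : realType.

Lemma ln_leif_subr1 (x : R) : 0 < x -> ln x <= x - 1 ?= iff (x == 1).
Proof.
move=> x_gt0; have le_ln : ln x <= x - 1.
  by have := expR_ge1Dx (ln x); rewrite lnK ?posrE //; lra.
split=> //; have [->|x_neq1] := eqVneq x 1; first by rewrite ln1 subrr eqxx.
have : ln x != 0 by rewrite ln_eq0.
by move/expR_gt1Dx; rewrite lnK ?posrE // => lt_x; rewrite lt_eqF //; lra.
Qed.

(* For [q > 0] the left side is [q ln (1 / (s q))]: this is [ln y <= y - 1] scaled by [q]. *)
Lemma gibbs_leif (s q : R) : 0 < s -> 0 <= q ->
  q * (- ln q - ln s) <= s^-1 - q ?= iff (q == s^-1).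
Proof.
move=> s_gt0; rewrite le_eqVlt => /orP[/eqP <-|q_gt0].
  have si_gt0 : 0 < s^-1 by rewrite invr_gt0.
  by rewrite mul0r subr0; split; rewrite ?ltW // eq_sym !gt_eqF.
have sq_gt0 : 0 < s * q by rewrite mulr_gt0.
have -> : - ln q - ln s = ln (s * q)^-1 by rewrite lnV ?lnM ?posrE //; lra.
have -> : s^-1 - q = q * ((s * q)^-1 - 1).
  by rewrite mulrBr mulr1 invfM mulrCA mulfV ?gt_eqF // mulr1.
have -> : (q == s^-1) = ((s * q)^-1 == 1).
  by rewrite invr_eq1 -(inj_eq (mulfI (lt0r_neq0 s_gt0))) mulfV ?lt0r_neq0.
by rewrite (mono_leif (ler_pM2l q_gt0)); apply: ln_leif_subr1; rewrite invr_gt0.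
Qed.

Definition shannon (X : finType) (q : X -> R) : R := - \sum_x q x * ln (q x).

Definition unif (X : finType) (S : {pred X}) (x : X) : R := (x \in S)%:R / #|S|%:R.

Section Support.
Variables (X : finType) (S : {pred X}).

Definition supported (q : X -> R) : Prop := forall x, x \notin S -> q x = 0.

Lemma supported_card_gt0 (q : X -> R) : is_dist q -> supported q -> (0 < #|S|)%N.
Proof.
move=> [_ q_sum1] q_supp; rewrite lt0n; apply/negP => /eqP/card0_eq S0.
move: q_sum1; rewrite big1 => [/eqP|x _]; first by rewrite eq_sym oner_eq0.
by apply: q_supp; rewrite S0.
Qed.

Lemma shannon_leif (q : X -> R) : is_dist q -> supported q ->
  shannon q <= ln #|S|%:R ?= iff [forall x in S, q x == #|S|%:R^-1].
Proof.
move=> q_dist q_supp; have [q_ge0 q_sum1] := q_dist; set s := #|S|%:R.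
have s_gt0 : 0 < s by rewrite ltr0n (supported_card_gt0 q_dist).
have sum_S (F : X -> R) : (forall x, q x = 0 -> F x = 0) ->
    \sum_(x in S) F x = \sum_x F x.
  move=> F0; rewrite [RHS](bigID (mem S)) /= [X in _ + X]big1 ?addr0 //.
  by move=> x /q_supp /F0.
have shannon_S : \sum_(x in S) q x * (- ln (q x) - ln s) = shannon q - ln s.
  rewrite sum_S => [|x ->]; last by rewrite mul0r.
  rewrite /shannon; under eq_bigr do rewrite mulrBr mulrN.
  by rewrite sumrB sumrN -big_distrl /= q_sum1 mul1r.
have mass_S : \sum_(x in S) (s^-1 - q x) = 0.
  by rewrite sumrB sumr_const (sum_S q) // q_sum1 -mulr_natl mulfV ?gt_eqF ?subrr.
have := @leif_sum _ _ (mem S) _ _ _ (fun x _ => gibbs_leif s_gt0 (q_ge0 x)).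
by rewrite shannon_S mass_S leifBLR add0r.
Qed.

Lemma unif_dist : (0 < #|S|)%N -> is_dist (unif S).
Proof.
move=> S_gt0; split=> [x|]; first by rewrite /unif divr_ge0 ?ler0n.
rewrite /unif -big_distrl /=.
have -> : \sum_x (x \in S)%:R = \sum_(x in S) (1 : R).
  by rewrite [RHS]big_mkcond; apply: eq_bigr => x _; case: (x \in S).
by rewrite sumr_const mulfV // pnatr_eq0 -lt0n.
Qed.

Lemma unif_supported : supported (unif S).
Proof. by move=> x /negbTE xS; rewrite /unif xS mul0r. Qed.

Lemma shannon_unif_max (q : X -> R) : is_dist q -> supported q ->
  shannon q <= shannon (unif S) /\ (shannon q = shannon (unif S) -> q = unif S).
Proof.
move=> q_dist q_supp; have S_gt0 := supported_card_gt0 q_dist q_supp.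
have -> : shannon (unif S) = ln #|S|%:R.
  have unif_eq : [forall x in S, unif S x == #|S|%:R^-1].
    by apply/forall_inP => x xS; rewrite /unif xS mul1r.
  by have [_] := shannon_leif (unif_dist S_gt0) unif_supported; rewrite unif_eq => /eqP.
have [le_q eq_q] := shannon_leif q_dist q_supp; split=> // /eqP.
rewrite eq_q => /forall_inP q_unif; apply: boolp.funext => x.
have [xS|xS] := boolP (x \in S); first by rewrite /unif xS mul1r; apply/eqP/q_unif.
by rewrite q_supp // unif_supported.
Qed.
End Support.
End MaxEntropy.
Arguments unif {R X} S x.

Section Game.
Variables (R : realType) (N : finType) (A : N -> finType).
Variable u : N -> profile N A -> R.

Lemma prod_eq_profile (a c : profile N A) :
  \prod_j ((a j == c j)%:R : R) = (a == c)%:R.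
Proof.
have [->|/eqP a_neq_c] := eqVneq a c; first by rewrite big1 // => j _; rewrite eqxx.
have [j a_neq_c_j] : exists j, a j != c j.
  apply/existsP; rewrite -negb_forall; apply: contra_notN a_neq_c => /forallP a_eq_c.
  by apply/ffunP => j; apply/eqP.
by rewrite (bigD1 j) //= (negbTE a_neq_c_j) mul0r.
Qed.

Lemma mixpay_pure (i : N) (s : forall j, A j -> R) (c : profile N A) :
  (forall j, s j =1 pure R (c j)) -> mixpay u i s = u i c.
Proof.
move=> s_pure; rewrite /mixpay.
under eq_bigr => a _ do under eq_bigr => j _ do rewrite s_pure /pure.
under eq_bigr => a _ do rewrite prod_eq_profile.
by rewrite (bigD1 c) //= eqxx mul1r big1 ?addr0 // => a /negbTE ->; rewrite mul0r.
Qed.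

Variable p : profile N A -> R.
Hypothesis p_ce : correlated_eq u p.

Lemma correlated_eq_slice (i : N) (x b : A i) :
  0 <= \sum_(a : profile N A | a i == x) p a * (u i a - u i (upd a i b)).
Proof.
have [[p_ge0 _] p_obey] := p_ce.
have [mass_gt0|] := ltP 0 (\sum_(a : profile N A | a i == x) p a); first exact: p_obey.
move=> mass_le0; have /psumr_eq0P p0 : \sum_(a : profile N A | a i == x) p a = 0.
  by apply/eqP; rewrite eq_le mass_le0 sumr_ge0.
by rewrite big1 // => a ax; rewrite p0 // mul0r.
Qed.

Lemma correlated_eq_sole_player (i : N) : (forall j, j = i) ->
  forall (a : profile N A) (b : A i), 0 <= p a * (u i a - u i (upd a i b)).
Proof.
move=> sole a b; have := correlated_eq_slice (a i) b.
rewrite (big_pred1 a) => [//|a' /=]; apply/eqP/eqP => [a'i|-> //]; apply/ffunP => j.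
by have ji := sole j; subst j.
Qed.

End Game.

Lemma rat_weights_scale_to_nat (R : realType) (X : finType) (p : X -> R) :
  (forall x, 0 <= p x) -> (forall x, exists r : rat, p x = ratr r) ->
  exists2 lam : R, 0 < lam & exists n : X -> nat, forall x, (n x)%:R = lam * p x.
Proof.
move=> p_ge0 p_rat; have [r p_r] := fin_all_exists p_rat.
pose den x := `|denq (r x)|%N.
have den_gt0 x : 0 < (den x)%:R :> R by rewrite ltr0n absz_gt0 denq_neq0.
exists (\prod_x den x)%:R; first by rewrite natr_prod prodr_gt0.
exists (fun x => `|numq (r x)| * \prod_(y | y != x) den y)%N => x.
have num_ge0 : 0 <= numq (r x) by rewrite numq_ge0 -(ler0q R) -p_r.
rewrite [in RHS](bigD1 x) //= !natrM p_r /ratr /den !natr_absz ger0_norm // gtr0_norm ?denq_gt0 //.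
have den_neq0 : (denq (r x))%:~R != 0 :> R by rewrite intr_eq0 denq_neq0.
by field.
Qed.

Section NoiseCount.
Variables (R : realType) (N : finType).

Lemma sum_noise_shift (G : finZmodType) (i j0 : N) (k c : G) : i != j0 ->
  \sum_(g : profile N (fun _ => G)) ((g i == k)%:R * (\sum_j g j == c)%:R : R)
  = \sum_(g : profile N (fun _ => G)) (g i == k)%:R * (\sum_j g j == 0)%:R.
Proof.
(* Shifting the noise of player [j0] by [c] keeps [g i] and adds [c] to the total. *)
move=> i_neq_j0; pose shift d (g : profile N (fun _ => G)) : profile N (fun _ => G) :=
  [ffun j => if j == j0 then g j + d else g j].
have shiftK d : cancel (shift d) (shift (- d)).
  by move=> g; apply/ffunP => j; rewrite !ffunE; case: (j == j0); rewrite ?addrK.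
rewrite (reindex_inj (can_inj (shiftK c))); apply: eq_bigr => g _.
rewrite ffunE (negbTE i_neq_j0) (bigD1 j0) //= ffunE eqxx.
rewrite (eq_bigr g) => [|j /negbTE j_neq_j0]; last by rewrite ffunE j_neq_j0.
by rewrite [\sum_j g j](bigD1 j0) //= addrAC -[X in _ + c == X]add0r (inj_eq (addIr c)).
Qed.

Lemma sum_ord_lt (T n : nat) : (n <= T.+1)%N -> \sum_(c : 'I_T.+1) ((c < n)%N%:R : R) = n%:R.
Proof.
move=> n_le; rewrite (eq_bigr (fun c : 'I_T.+1 => if (c < n)%N then 1 else 0)).
  by rewrite -big_mkcond -(big_ord_widen _ (fun _ => 1 : R) n_le) sumr_const card_ord.
by move=> c _; case: (c < n)%N.
Qed.

Lemma sum_noise_below (T : nat) (i j0 : N) (k : 'I_T.+1) (n : nat) :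
  i != j0 -> (n <= T.+1)%N ->
  \sum_(g : profile N (fun _ => 'I_T.+1)) ((g i == k)%:R * (val (\sum_j g j)%R < n)%N%:R : R)
  = n%:R * \sum_(g : profile N (fun _ => 'I_T.+1)) (g i == k)%:R * (\sum_j g j == 0)%:R.
Proof.
move=> i_neq_j0 n_le; rewrite -(sum_ord_lt n_le) big_distrl /=.
under [RHS]eq_bigr => c _ do rewrite -(sum_noise_shift _ c i_neq_j0) big_distrr /=.
rewrite exchange_big /=; apply: eq_bigr => g _.
rewrite [RHS](bigD1 (\sum_j g j)%R) //= [X in _ + X]big1 => [|c].
  by rewrite eqxx mulr1 addr0 mulrC.
by rewrite eq_sym => /negbTE ->; rewrite !mulr0.
Qed.

End NoiseCount.

Section Messages.
Variables (R : realType) (N : finType) (A : N -> finType) (T : nat).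
Local Notation noise := (profile N (fun _ => 'I_T.+1)).

Definition msg (j : N) : finType := (A j * 'I_T.+1)%type.

Definition msg_act (m : profile N msg) : profile N A := [ffun j => (m j).1].
Definition msg_noise (m : profile N msg) : noise := [ffun j => (m j).2].
Definition mkmsg (a : profile N A) (g : noise) : profile N msg := [ffun j => (a j, g j)].

Lemma mkmsg_act a g : msg_act (mkmsg a g) = a.
Proof. by apply/ffunP => j; rewrite !ffunE. Qed.

Lemma mkmsg_noise a g : msg_noise (mkmsg a g) = g.
Proof. by apply/ffunP => j; rewrite !ffunE. Qed.

Lemma sum_mkmsg (F : profile N msg -> R) :
  \sum_m F m = \sum_a \sum_(g : noise) F (mkmsg a g).
Proof.
rewrite pair_big /= (reindex (fun ag : profile N A * noise => mkmsg ag.1 ag.2)) //.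
exists (fun m => (msg_act m, msg_noise m)) => [[a g] _ | m _] /=.
  by rewrite mkmsg_act mkmsg_noise.
by apply/ffunP => j; rewrite !ffunE /=; case: (m j).
Qed.

Definition obey (j : N) (mj : msg j) : A j -> R := pure R mj.1.
Arguments obey : clear implicits.

Lemma obey_strategy : is_strategy obey.
Proof.
move=> j mj; split=> [y|]; first by rewrite /obey /pure ler0n.
by rewrite /obey (bigD1 mj.1) //= /pure eqxx big1 ?addr0 // => y /negbTE ->.
Qed.

Lemma prod_obey_mkmsg (a a' : profile N A) (g : noise) :
  \prod_j obey j (mkmsg a' g j) (a j) = (a == a')%:R :> R.
Proof. by rewrite -prod_eq_profile; apply: eq_bigr => j _; rewrite ffunE. Qed.

Variable u : N -> profile N A -> R.

Lemma mixpay_obey i m : mixpay u i (mixed_at obey m) = u i (msg_act m).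
Proof. by apply: mixpay_pure => j y; rewrite /mixed_at /obey ffunE. Qed.

Lemma mixpay_obey_dev i m (b : A i) :
  mixpay u i (dfwith (mixed_at obey m) (pure R b)) = u i (upd (msg_act m) i b).
Proof.
apply: mixpay_pure => j; rewrite /upd ffunE.
by have [<-|i_neq_j] := eqVneq i j => y; rewrite ?dfwith_in ?dfwith_out // /mixed_at /obey ffunE.
Qed.

End Messages.
Arguments obey {R N A T} j mj.

Section Implementation.
Variables (R : realType) (N : finType) (A : N -> finType) (T : nat).
Variables (u : N -> profile N A -> R) (p : profile N A -> R).
Hypothesis p_ce : correlated_eq u p.
Variables (n : profile N A -> nat) (lam : R).
Hypothesis lam_gt0 : 0 < lam.
Hypothesis n_scale : forall a, (n a)%:R = lam * p a.
Hypothesis n_le : forall a, (n a <= T.+1)%N.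

Local Notation M := (msg A T).
Local Notation noise := (profile N (fun _ => 'I_T.+1)).

Definition noise_count (i : N) (k : 'I_T.+1) (a : profile N A) : R :=
  \sum_(g : noise) (g i == k)%:R * (val (\sum_j g j)%R < n a)%N%:R.

Lemma obedient_noise_count (i : N) (x : A i) (k : 'I_T.+1) (b : A i) :
  0 <= \sum_(a : profile N A) (a i == x)%:R * (u i a - u i (upd a i b)) * noise_count i k a.
Proof.
have count_ge0 a : 0 <= noise_count i k a by apply: sumr_ge0 => g _; rewrite mulr_ge0.
(* With another player [j0], the count is proportional to [n a], hence to [p a];
   with [i] alone, the recommendation [x] determines [a]. *)
case: (pickP [pred j | j != i]) => [j0 /= | sole].
  rewrite eq_sym => i_neq_j0.
  pose Z := \sum_(g : noise) ((g i == k)%:R * (\sum_j g j == 0)%:R : R).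
  have Z_ge0 : 0 <= Z by apply: sumr_ge0 => g _; rewrite mulr_ge0.
  have count_p a : noise_count i k a = lam * p a * Z.
    by rewrite -n_scale /noise_count (sum_noise_below _ _ i_neq_j0 (n_le a)).
  rewrite (eq_bigr (fun a : profile N A => lam * Z *
    (if a i == x then p a * (u i a - u i (upd a i b)) else 0))) => [|a _].
    rewrite -big_distrr /= -big_mkcond mulr_ge0 ?mulr_ge0 ?(ltW lam_gt0) //.
    exact: correlated_eq_slice.
  by rewrite count_p; case: (a i == x); rewrite /= ?mul0r ?mulr0 //; ring.
apply: sumr_ge0 => a _; case: eqP => [a_i|_]; last by rewrite !mul0r.
have [n0|n_gt0] := posnP (n a).
  suff -> : noise_count i k a = 0 by rewrite mulr0.
  by apply: big1 => g _; rewrite n0 mulr0.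
have p_gt0 : 0 < p a.
  by move: n_gt0; rewrite -(ltr0n R) n_scale pmulr_rgt0.
rewrite mul1r mulr_ge0 // -(pmulr_rge0 _ p_gt0).
apply: correlated_eq_sole_player => // j; exact/eqP/negbFE/sole.
Qed.

Definition msg_supp : {pred profile N M} :=
  [pred m | (val (\sum_j msg_noise m j)%R < n (msg_act m))%N].

Lemma unif_obedient (i : N) (mi : M i) (b : A i) :
  0 <= \sum_(m : profile N M | m i == mi) unif msg_supp m *
         (mixpay u i (mixed_at obey m) - mixpay u i (dfwith (mixed_at obey m) (pure R b))).
Proof.
case: mi => x k; under eq_bigr do rewrite mixpay_obey mixpay_obey_dev.
rewrite big_mkcond sum_mkmsg.
rewrite (eq_bigr (fun a : profile N A => #|msg_supp|%:R^-1 *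
  ((a i == x)%:R * (u i a - u i (upd a i b)) * noise_count i k a))) => [|a _].
  by rewrite -big_distrr /= mulr_ge0 ?invr_ge0 ?ler0n ?obedient_noise_count.
rewrite /noise_count !big_distrr /=; apply: eq_bigr => g _.
rewrite /unif inE mkmsg_act mkmsg_noise ffunE xpair_eqE.
by case: (a i == x); case: (g i == k); rewrite /= ?mul0r ?mulr0 //; ring.
Qed.

Definition msg_eta (mu : profile N A -> R) (m : profile N M) : R :=
  (msg_noise m == [ffun => 0])%:R * mu (msg_act m).

Definition msg_constraint (f : profile N M -> R) : Prop :=
  f = fun m => (m \notin msg_supp)%:R.

Variable mu : profile N A -> R.
Hypothesis mu_dist : is_dist mu.
Hypothesis mu_supp : forall a, 0 < mu a -> 0 < p a.

Lemma sum_msg_eta_noise (a : profile N A) : \sum_(g : noise) msg_eta mu (mkmsg a g) = mu a.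
Proof.
rewrite (bigD1 [ffun => 0]) //= big1 => [|g /negbTE g_neq0].
  by rewrite /msg_eta mkmsg_act mkmsg_noise eqxx mul1r addr0.
by rewrite /msg_eta mkmsg_noise g_neq0 mul0r.
Qed.

Lemma msg_eta_dist : is_dist (msg_eta mu).
Proof.
have [mu_ge0 mu_sum1] := mu_dist.
split=> [m|]; first by rewrite mulr_ge0 ?ler0n.
by rewrite sum_mkmsg -mu_sum1; apply: eq_bigr => a _; rewrite sum_msg_eta_noise.
Qed.

Lemma msg_eta_supported : supported msg_supp (msg_eta mu).
Proof.
move=> m; apply: contraNeq; rewrite mulf_eq0 negb_or pnatr_eq0 eqb0 negbK.
case/andP => /eqP noise0 mu_neq0; rewrite inE noise0 big1 => [|j _]; last by rewrite ffunE.
have [mu_ge0 _] := mu_dist.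
by rewrite -(ltr0n R) n_scale mulr_gt0 // mu_supp // lt_def mu_neq0 mu_ge0.
Qed.

Lemma mass_off_supp (q : profile N M -> R) : supported msg_supp q ->
  \sum_m q m * (m \notin msg_supp)%:R = 0.
Proof.
by move=> q_supp; apply: big1 => m _; case: (boolP (m \in msg_supp)) => [|/q_supp ->];
  rewrite ?mulr0 ?mul0r.
Qed.

Lemma DeltaD_msgE (q : profile N M -> R) :
  DeltaD (msg_eta mu) msg_constraint q <-> is_dist q /\ supported msg_supp q.
Proof.
split=> [[q_dist q_cons] | [q_dist q_supp]].
  split=> // m m_off; have [q_ge0 _] := q_dist.
  move: (q_cons _ erefl); rewrite [RHS](mass_off_supp msg_eta_supported).
  move/eqP; rewrite psumr_eq0 => [|m' _]; last by rewrite mulr_ge0.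
  by move/allP/(_ m (mem_index_enum m)); rewrite m_off mulr1 => /eqP.
by split=> // _ ->; rewrite !mass_off_supp //; exact: msg_eta_supported.
Qed.

Lemma msg_maxent : maxent_belief (msg_eta mu) msg_constraint (unif msg_supp).
Proof.
have supp_gt0 := supported_card_gt0 msg_eta_dist msg_eta_supported.
split; first by apply/DeltaD_msgE; split; [exact: unif_dist | exact: unif_supported].
by split=> q /DeltaD_msgE [q_dist q_supp]; have [] := shannon_unif_max q_dist q_supp.
Qed.

Lemma msg_outcome (a : profile N A) :
  mu a = \sum_m msg_eta mu m * \prod_j obey j (m j) (a j).
Proof.
rewrite sum_mkmsg (bigD1 a) //= [X in _ + X]big1 => [|a' a'_neq_a].
  under eq_bigr do rewrite prod_obey_mkmsg eqxx mulr1.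
  by rewrite sum_msg_eta_noise addr0.
by apply: big1 => g _; rewrite prod_obey_mkmsg eq_sym (negbTE a'_neq_a) mulr0.
Qed.

Lemma msg_implements : implemented u (msg_eta mu) msg_constraint mu.
Proof.
exists obey; split; first exact: obey_strategy.
exists (unif msg_supp); split; first exact: msg_maxent.
by split=> [i mi _ b|]; [exact: unif_obedient | exact: msg_outcome].
Qed.

End Implementation.

Unset Implicit Arguments.

Theorem lemma1 (R : realType) (N : finType) (A : N -> finType)
  (u : N -> profile N A -> R) (p : profile N A -> R) :
  correlated_eq u p ->
  (forall a : profile N A, exists r : rat, p a = ratr r) ->
  exists M : N -> finType,
    forall mu : profile N A -> R,
      is_dist mu ->
      (forall a : profile N A, 0 < mu a -> 0 < p a) ->
      exists (eta : profile N M -> R) (F : (profile N M -> R) -> Prop),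
        is_dist eta /\ implemented u eta F mu.
Proof.
move=> p_ce p_rat; have [[p_ge0 _] _] := p_ce.
have [lam lam_gt0 [n n_scale]] := rat_weights_scale_to_nat p_ge0 p_rat.
pose T := (\max_a n a)%N.
have n_le a : (n a <= T.+1)%N by rewrite ltnW // ltnS leq_bigmax.
exists (msg A T) => mu mu_dist mu_supp.
exists (msg_eta mu), (msg_constraint n); split; first exact: msg_eta_dist.
exact: (msg_implements p_ce lam_gt0 n_scale n_le mu_dist mu_supp).
Qed.
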